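(* Suppose that $\|\tilde{\mu}_{m}-\mu\|_\infty=\mathcal{O}_{\mathrm{P}}(a_m)$ and $\|\tilde{\pi}_{m}-\pi\|_\infty=\mathcal{O}_{\mathrm{P}}(a_m)$ for sufficiently large $m$, where $\{a_m\}$ is a deterministic sequence with $a_m\to 0$. Suppose in addition that, for sufficiently large $m$ and conditionally on the fitted function $\tilde{\mu}_{m}(\cdot)$, the joint density $b_m(x,u)$ of $(\mu(Z),\eta_m(Z))$, where $\eta_m=a_m^{-1}(\tilde{\mu}_{m}-\mu)$, and its partial derivatives $\partial_x b_m(x,u)$, $\partial_x^2 b_m(x,u)$ exist for all $x,u$ and there are non-negative functions $\bar b_{m,i}(u)$, $i=0,1,2$, with $b_m(x,u)\le \bar b_{m,0}(u)$, $|\partial_x b_m(x,u)|\le \bar b_{m,1}(u)$, $|\partial_x^2 b_m(x,u)|\le \bar b_{m,2}(u)$ for all $x,u$ and $\sup_m\int_{\mathbb{R}}|u|^r\bar b_{m,i}(u)\,du<\infty$ for $r=0,1,2,3$ and $i=0,1,2$. Suppose also that $f_\mu(q)>0$. Then $\tilde{q}_{m}-q=\mathcal{O}_{\mathrm{P}}(a_m)$.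
   Context: $Z$ denotes the risk factors, $\mu(z)=\mathrm{E}[X\mid Z=z]$ and $\pi(z)=\mathrm{E}[Y\mid Z=z]$ are portfolio loss functions, and $\tilde{\mu}_{m},\tilde{\pi}_{m}$ are approximations of them fitted in a first stage from $m$ outer-level scenarios (each with inner-level observations). $\|\cdot\|_\infty$ is the essential supremum norm over the domain of $Z$ w.r.t. its distribution. $q$ is the $\alpha$-VaR of $\mu(Z)$, i.e. $\Pr\{\mu(Z)\le q\}=\alpha$, and $\tilde{q}_{m}$ is the $\alpha$-VaR of $\tilde{\mu}_{m}(Z)$ conditionally on the fitted functions, i.e. $\mathrm{Pr}_m\{\tilde{\mu}_{m}(Z)\le \tilde{q}_{m}\}=\alpha$, where $\mathrm{Pr}_m$ is probability conditional on $\tilde{\mu}_{m},\tilde{\pi}_{m}$. $f_\mu$ is the density of $\mu(Z)$. *)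

From HB Require Import structures.
From mathcomp Require Import all_boot all_order all_algebra.
From mathcomp Require Import all_classical all_reals all_analysis ess_sup_inf.
Set Implicit Arguments. Unset Strict Implicit. Unset Printing Implicit Defensive.
Import Order.TTheory GRing.Theory Num.Theory.
Import numFieldNormedType.Exports.
Local Open Scope classical_set_scope.
Local Open Scope ring_scope.

(* Stochastic boundedness X_m = O_P(a_m) for a sequence of (extended-real)
   random quantities X m : Omega -> \bar R on the probability space P:
   for every eps > 0 there are M and N such that for all m >= N the event
   {X m <= M a_m} has probability at least 1 - eps (stated with a measurable
   sub-event, i.e. via inner probability, so no measurability of X m is
   presupposed; for measurable X m this is the usual definition). *)
Definition boundedP {R : realType} {d : measure_display} {Omega : measurableType d}
  (P : probability Omega R) (X : nat -> Omega -> \bar R) (a : nat -> R) : Prop :=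
  forall eps : R, 0 < eps ->
  exists M : R, exists N : nat, forall m : nat, (N <= m)%N ->
    exists A : set Omega, measurable A /\ (P A >= (1 - eps)%:E)%E /\
      forall w, A w -> (X m w <= (M * a m)%:E)%E.

Definition sup_norm {R : realType} {d : measure_display} {T : measurableType d}
  (PZ : probability T R) (f : T -> R) : \bar R :=
  ess_sup PZ (fun z => (`|f z|)%:E).

Definition is_joint_density {R : realType} {d : measure_display} {T : measurableType d}
  (PZ : probability T R) (g1 g2 : T -> R) (b : R -> R -> R) : Prop :=
  measurable_fun [set: R * R] (fun p : R * R => b p.1 p.2) /\
  (forall x u, 0 <= b x u) /\
  forall A : set (R * R), measurable A ->
    PZ [set z | A (g1 z, g2 z)] =
    (\int[(@lebesgue_measure R) \x (@lebesgue_measure R)]_(p in A) (b p.1 p.2)%:E)%E.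

Definition is_density {R : realType} {d : measure_display} {T : measurableType d}
  (PZ : probability T R) (g : T -> R) (f : R -> R) : Prop :=
  measurable_fun [set: R] f /\ (forall x, 0 <= f x) /\
  forall A : set R, measurable A ->
    PZ [set z | A (g z)] = (\int[@lebesgue_measure R]_(x in A) (f x)%:E)%E.

From HB Require Import structures.
From mathcomp Require Import all_boot all_order all_algebra.
From mathcomp Require Import all_classical all_reals all_analysis ess_sup_inf.
From mathcomp Require Import measurable_realfun.
From mathcomp Require Import lra.
Import Order.TTheory GRing.Theory Num.Theory.
Import numFieldNormedType.Exports.
Local Open Scope classical_set_scope.
Local Open Scope ring_scope.

(* Off a null set |mut - mu| <= delta := ||mut - mu||_oo, hence
   {mu <= x - delta} is contained in {mut <= x}, and {mut <= x} in
   {mu <= x + delta}, up to null sets.  As the distribution function of mu(Z)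
   strictly increases through q (its density is continuous and positive there),
   the alpha-quantiles q and qt of mu(Z) and mut(Z) then satisfy
   |qt - q| <= ||mut - mu||_oo, so the O_P(a_m) rate of the sup-norm error passes
   to the quantile. *)

Lemma integral_itv_gt0_of_cont_gt0 {R : realType} (f : R -> R) (q x y : R) :
  measurable_fun [set: R] f -> (forall z, 0 <= f z) ->
  {for q, continuous f} -> 0 < f q -> x < y -> x <= q <= y ->
  (0 < \int[lebesgue_measure]_(z in [set` `]x, y]]) (f z)%:E)%E.
Proof.
move=> mf f0 cf fq0 xy /andP[xq qy].
have fq2 : 0 < f q / 2 by rewrite divr_gt0.
have [r /= r0 near_q] : exists2 r : R, 0 < r & ball q r `<=` [set z | f q / 2 < f z].
  by apply/nbhs_ballP; apply: (cvgr_gt _ cf); rewrite ltr_pdivrMr //; lra.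
pose u := Num.max x (q - r / 2); pose v := Num.min y (q + r / 2).
have uv : u < v.
  by rewrite gt_max !lt_min; apply/andP; split; apply/andP; split; lra.
have uv_sub : [set` `]u, v]] `<=` [set` `]x, y]].
  move=> z /=; rewrite !in_itv /= gt_max le_min => /andP[/andP[xz _] /andP[zy _]].
  by rewrite xz zy.
have f_gt : forall z, z \in `]u, v] -> f q / 2 < f z.
  move=> z; rewrite in_itv /= gt_max le_min => /andP[/andP[_ zl] /andP[_ zr]].
  by apply: near_q; rewrite /ball /= ltr_norml; apply/andP; split; lra.
have mfE : measurable_fun [set: R] (fun z => (f z)%:E) by exact/measurable_EFinP.
apply: (@lt_le_trans _ _ (\int[lebesgue_measure]_(z in [set` `]u, v]]) (f q / 2)%:E)%E).
  rewrite integral_cst //= lebesgue_measure_itv /= lte_fin uv -EFinB -EFinM.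
  by rewrite lte_fin mulr_gt0 // subr_gt0.
apply: (@le_trans _ _ (\int[lebesgue_measure]_(z in [set` `]u, v]]) (f z)%:E)%E).
  apply: ge0_le_integral => //.
  - by move=> z _; rewrite lee_fin ltW.
  - exact: measurable_funS mfE.
  - by move=> z zuv; rewrite lee_fin ltW // f_gt.
apply: ge0_subset_integral => //; first exact: measurable_funS mfE.
by move=> z _; rewrite lee_fin.
Qed.

Section measure_comparison.
Context {d : measure_display} {T : measurableType d} {R : realType}.
Implicit Types (mu : {measure set T -> \bar R}) (A B : set T) (g h : T -> R).

Lemma measurable_ler_preimage g (x : R) :
  measurable_fun [set: T] g -> measurable [set z | g z <= x].
Proof.
move=> mg; have := mg measurableT _ (measurable_itv `]-oo, x]).
by rewrite setTI; congr measurable; apply/seteqP; split => z /=; rewrite in_itv.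
Qed.

Lemma le_measure_ae mu A B :
  measurable A -> measurable B -> {ae mu, forall z, A z -> B z} ->
  (mu A <= mu B)%E.
Proof.
move=> mA mB [N [mN muN0 AB]].
rewrite (measureDI mu mA mN) (subset_measure0 _ mN (@subIsetr _ A N) muN0) ?adde0.
- apply: le_measure; rewrite ?inE //; first exact: measurableD.
  by move=> z [Az Nz]; apply: contrapT => Bz; apply: Nz; apply: AB => /(_ Az).
- exact: measurableI.
Qed.

Lemma le_measure_ler_shift mu g h (delta x : R) :
  measurable_fun [set: T] g -> measurable_fun [set: T] h ->
  {ae mu, forall z, `|g z - h z| <= delta} ->
  (mu [set z | (h z <= x - delta)%R] <= mu [set z | (g z <= x)%R])%E.
Proof.
move=> mg mh gh; apply: le_measure_ae; try exact: measurable_ler_preimage.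
apply: filterS gh => z /=; rewrite ler_norml => /andP[? ?] ?; lra.
Qed.

End measure_comparison.

Section quantile.
Context {d : measure_display} {T : measurableType d} {R : realType}.
Variable PZ : probability T R.

Lemma cdf_lt_of_density (h : T -> R) (f : R -> R) (q x y : R) :
  measurable_fun [set: T] h -> is_density PZ h f ->
  {for q, continuous f} -> 0 < f q -> x < y -> x <= q <= y ->
  (PZ [set z | (h z <= x)%R] < PZ [set z | (h z <= y)%R])%E.
Proof.
move=> mh [mf [f0 dens]] cf fq xy xqy.
have mxy : measurable [set z | h z \in `]x, y]].
  by have := mh measurableT _ (measurable_itv `]x, y]); rewrite setTI.
have -> : [set z | h z <= y] = [set z | h z <= x] `|` [set z | h z \in `]x, y]].
  apply/seteqP; split => z /=; rewrite in_itv /=.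
    by move=> zy; case: (leP (h z) x) => zx; [left | right; apply/andP].
  by case=> [zx | /andP[_ //]]; rewrite (le_trans zx) ?ltW.
rewrite measureU //; first last.
- by apply/seteqP; split => z //= [zx]; rewrite in_itv /= => /andP[? _]; lra.
- exact: measurable_ler_preimage.
rewrite lteDl; last by rewrite fin_num_measure //; exact: measurable_ler_preimage.
have := dens _ (measurable_itv `]x, y]); rewrite /= => ->.
exact: integral_itv_gt0_of_cont_gt0 mf f0 cf fq xy xqy.
Qed.

Lemma quantile_dist_le_sup_norm (g h : T -> R) (delta alpha qg qh : R) :
  measurable_fun [set: T] g -> measurable_fun [set: T] h ->
  (sup_norm PZ (fun z => (g z - h z)%R) <= delta%:E)%E ->
  PZ [set z | g z <= qg] = alpha%:E -> PZ [set z | h z <= qh] = alpha%:E ->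
  (forall x y, x < y -> x <= qh <= y ->
     (PZ [set z | (h z <= x)%R] < PZ [set z | (h z <= y)%R])%E) ->
  `|qg - qh| <= delta.
Proof.
move=> mg mh /ess_supP g_h Fg Fh h_incr.
have ae_g_h : {ae PZ, forall z, `|g z - h z| <= delta}.
  by apply: filterS g_h => z; rewrite lee_fin.
have ae_h_g : {ae PZ, forall z, `|h z - g z| <= delta}.
  by apply: filterS ae_g_h => z; rewrite distrC.
rewrite ler_norml !lerBlDl; apply/andP; split; rewrite leNgt; apply/negP => lt_q.
- have : (PZ [set z | (g z <= qg)%R] <= PZ [set z | (h z <= qg + delta)%R])%E.
    by rewrite -{1}(addrK delta qg); exact: le_measure_ler_shift.
  rewrite Fg -Fh; apply/negP; rewrite -ltNge.
  by apply: h_incr; rewrite ?lexx ?andbT; lra.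
- have : (PZ [set z | (h z <= qg - delta)%R] <= PZ [set z | (g z <= qg)%R])%E.
    exact: le_measure_ler_shift.
  rewrite Fg -Fh; apply/negP; rewrite -ltNge.
  by apply: h_incr; rewrite ?lexx //; lra.
Qed.

End quantile.

Theorem proposition2
  (R : realType)
  (dO : measure_display) (Omega : measurableType dO) (P : probability Omega R)
  (dT : measure_display) (T : measurableType dT) (PZ : probability T R)
  (mu pi : T -> R)
  (mut pit : nat -> Omega -> T -> R)
  (a : nat -> R)
  (alpha q : R) (qt : nat -> Omega -> R)
  (fmu : R -> R)
  (b : nat -> Omega -> R -> R -> R)
  (bbar : nat -> 'I_3 -> R -> R) :
  0 < alpha < 1 ->
  measurable_fun [set: T] mu ->
  measurable_fun [set: T] pi ->
  (forall m w, measurable_fun [set: T] (mut m w)) ->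
  (forall m w, measurable_fun [set: T] (pit m w)) ->
  a @ \oo --> 0 ->
  (* alpha-VaR of mu(Z) and of mut_m(Z) (conditionally on the first stage) *)
  PZ [set z | mu z <= q] = alpha%:E ->
  (forall m w, PZ [set z | mut m w z <= qt m w] = alpha%:E) ->
  (* uniform approximation rates *)
  boundedP P (fun m w => sup_norm PZ (fun z => mut m w z - mu z)) a ->
  boundedP P (fun m w => sup_norm PZ (fun z => pit m w z - pi z)) a ->
  (* density assumptions, for sufficiently large m *)
  (exists N : nat, forall m : nat, (N <= m)%N ->
     0 < a m /\
     (forall w, is_joint_density PZ mu
                  (fun z => (a m)^-1 * (mut m w z - mu z)) (b m w)) /\
     (forall w x u,
        derivable (fun y => b m w y u) x 1 /\
        derivable (derive1 (fun y => b m w y u)) x 1) /\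
     (forall w x u,
        b m w x u <= bbar m ord0 u /\
        `|derive1 (fun y => b m w y u) x| <= bbar m (inord 1) u /\
        `|derive1 (derive1 (fun y => b m w y u)) x| <= bbar m (inord 2) u)) ->
  (forall m i u, 0 <= bbar m i u) ->
  (exists C : R, exists N : nat, forall m : nat, (N <= m)%N ->
     forall (i : 'I_3) (r : nat), (r <= 3)%N ->
       (\int[@lebesgue_measure R]_(u in [set: R]) ((`|u| ^+ r * bbar m i u)%:E)
          <= C%:E)%E) ->
  (* density of mu(Z), positive at q *)
  is_density PZ mu fmu ->
  {for q, continuous fmu} ->
  0 < fmu q ->
  boundedP P (fun m w => (`|qt m w - q|)%:E) a.
Proof.
move=> _ mmu _ mmut _ _ Fq Fqt mut_rate _ _ _ _ dens cf fq0 eps eps0.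
have [M [N mut_bounded]] := mut_rate eps eps0.
exists M, N => m mN.
have [A [mA [PA sup_le]]] := mut_bounded m mN.
exists A; do 2!split=> //; move=> w Aw; rewrite lee_fin.
apply: quantile_dist_le_sup_norm (Fqt m w) Fq _ => //; first exact: sup_le.
by move=> x y; exact: cdf_lt_of_density mmu dens cf fq0.
Qed.
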